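(* Let $\mathcal{P}$ be a finite nonempty set of stochastic trees and $\Pi$ any partition of $S_\mathcal{P}$ in which the start states of all trees in $\mathcal{P}$ lie in the same class. Then $P \preceq \mathcal{P}/\Pi$ for every $P \in \mathcal{P}$.
   Context: An LPTS is a tuple $\langle S,s^0,\alpha,\tau\rangle$ with finite state set $S$, start state $s^0$, finite action set $\alpha$, finite $\tau\subseteq S\times\alpha\times\mathrm{Dist}(S)$, where $\mathrm{Dist}(S)$ is the set of discrete probability distributions over $S$ (rational probabilities); write $s\xrightarrow{a}\mu$. A stochastic tree is an LPTS whose start state is in the support of no transition's distribution and every other state is in the support of exactly one transition's distribution. Strong simulation: for $\mu_1\in\mathrm{Dist}(S_1)$, $\mu_2\in\mathrm{Dist}(S_2)$, $R\subseteq S_1\times S_2$, $\mu_1\sqsubseteq_R\mu_2$ iff there is $w:S_1\times S_2\to\mathbb{Q}\cap[0,1]$ with $\sum_{s_2}w(s_1,s_2)=\mu_1(s_1)$, $\sum_{s_1}w(s_1,s_2)=\mu_2(s_2)$ and $w(s_1,s_2)>0\Rightarrow s_1Rs_2$; $R$ is a strong simulation iff $s_1Rs_2$ and $s_1\xrightarrow{a}\mu_1$ imply some $s_2\xrightarrow{a}\mu_2$ with $\mu_1\sqsubseteq_R\mu_2$; $L_1\preceq L_2$ iff a strong simulation relates the start states. $S_\mathcal{P}$ is the (disjoint) union of the state sets of the trees in $\mathcal{P}$. For a partition $\Pi$ of $S_\mathcal{P}$ with classes $E_\Pi$ and class $[s]$ of $s$, the quotient $\mathcal{P}/\Pi$ is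 the LPTS with states $E_\Pi$, start state the common class of the start states, actions $\bigcup_{P\in\mathcal{P}}\alpha_P$, and a transition $e\xrightarrow{a}\mu$ iff some tree $P\in\mathcal{P}$ has a transition $s\xrightarrow{a}\mu_p$ with $[s]=e$ and $\mu(e')=\sum_{s'\in e'}\mu_p(s')$ for all $e'\in E_\Pi$. *)

From HB Require Import structures.
From mathcomp Require Import all_boot all_order all_algebra.
Set Implicit Arguments. Unset Strict Implicit. Unset Printing Implicit Defensive.
Import Order.TTheory GRing.Theory Num.Theory.
Local Open Scope ring_scope.

(* The state set is a finite type, the action set a finite list (read as a set),
   the transition relation a finite list of triples (s, a, mu) where mu is a
   rational-valued function on states (required to be a distribution by [wf_lpts]). *)
Record lpts (A : eqType) := LPTS {
  st : finType;
  start : st;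
  acts : seq A;
  trans : seq (st * A * {ffun st -> rat})
}.

Definition is_dist (S : finType) (mu : {ffun S -> rat}) : bool :=
  [forall s, 0 <= mu s] && (\sum_s mu s == 1).

Definition wf_lpts (A : eqType) (L : lpts A) : bool :=
  uniq (trans L) &&
  all (fun t : st L * A * {ffun st L -> rat} => (t.1.2 \in acts L) && is_dist t.2) (trans L).

Definition stoch_tree (A : eqType) (L : lpts A) : bool :=
  wf_lpts L &&
  all (fun t : st L * A * {ffun st L -> rat} => t.2 (start L) == 0) (trans L) &&
  [forall s, (s != start L) ==>
     (count (fun t : st L * A * {ffun st L -> rat} => t.2 s != 0) (trans L) == 1%N)].

Definition lift_rel (S1 S2 : finType) (R : S1 -> S2 -> Prop)
  (mu1 : {ffun S1 -> rat}) (mu2 : {ffun S2 -> rat}) : Prop :=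
  exists w : S1 -> S2 -> rat,
    [/\ forall x y, 0 <= w x y <= 1,
        forall x, \sum_y w x y = mu1 x,
        forall y, \sum_x w x y = mu2 y
      & forall x y, 0 < w x y -> R x y].

Definition strong_sim (A : eqType) (L1 L2 : lpts A) (R : st L1 -> st L2 -> Prop) : Prop :=
  forall s1 s2 a mu1, R s1 s2 -> (s1, a, mu1) \in trans L1 ->
    exists mu2, (s2, a, mu2) \in trans L2 /\ lift_rel R mu1 mu2.

Definition simulated (A : eqType) (L1 L2 : lpts A) : Prop :=
  exists R, strong_sim R /\ R (start L1) (start L2).

Definition union_st (A : eqType) (I : finType) (P : I -> lpts A) : finType :=
  {i : I & st (P i)}.

Definition inj_st (A : eqType) (I : finType) (P : I -> lpts A) (i : I) (s : st (P i))
  : union_st P := Tagged (fun j => st (P j)) s.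

Definition class_t (T : finType) (Pi : {set {set T}}) : finType :=
  {B : {set T} | B \in Pi}.

Lemma pblock_in_partition (T : finType) (Pi : {set {set T}}) (x : T) :
  partition Pi [set: T] -> pblock Pi x \in Pi.
Proof. by move=> /andP[/eqP cov _]; apply: pblock_mem; rewrite cov inE. Qed.

Definition class_of (T : finType) (Pi : {set {set T}}) (hPi : partition Pi [set: T])
  (x : T) : class_t Pi :=
  exist _ (pblock Pi x) (pblock_in_partition x hPi).

(* Quotient P/Pi; i0 is used to name the (common) class of the start states. *)
Definition quotient (A : eqType) (I : finType) (P : I -> lpts A)
  (Pi : {set {set union_st P}}) (hPi : partition Pi [set: union_st P]) (i0 : I)
  : lpts A :=
  @LPTS A (class_t Pi)
    (class_of hPi (inj_st (start (P i0))))
    (flatten [seq acts (P i) | i <- enum I])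
    (flatten [seq [seq (class_of hPi (inj_st t.1.1), t.1.2,
                        [ffun e : class_t Pi =>
                           \sum_(s' : st (P i) | inj_st s' \in val e) t.2 s'])
                  | t : st (P i) * A * {ffun st (P i) -> rat} <- trans (P i)] | i <- enum I]).

From mathcomp Require Import all_boot all_order all_algebra.
Set Implicit Arguments. Unset Strict Implicit. Unset Printing Implicit Defensive.
Import Order.TTheory GRing.Theory Num.Theory.
Local Open Scope ring_scope.

(* Proof idea: relate every state of a tree to its class.  A transition of the
   tree is mirrored in the quotient by the same transition with the
   distribution pushed forward along the class map, and a distribution is
   always related to its own pushforward by the weight that puts the mass of
   each state on its image. *)

Lemma is_dist_bounds (S : finType) (mu : {ffun S -> rat}) (x : S) :
  is_dist mu -> 0 <= mu x <= 1.
Proof.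
case/andP=> /forallP mu_ge0 /eqP <-; rewrite mu_ge0 /=.
rewrite (bigD1 x) //= lerDl; exact: sumr_ge0.
Qed.

Lemma wf_trans_is_dist (A : eqType) (L : lpts A) s a mu :
  wf_lpts L -> (s, a, mu) \in trans L -> is_dist mu.
Proof. by case/andP=> _ /allP wfL /wfL /andP[]. Qed.

Definition pushforward (S1 S2 : finType) (f : S1 -> S2) (mu : {ffun S1 -> rat}) :
  {ffun S2 -> rat} := [ffun y => \sum_(x | f x == y) mu x].

Lemma lift_rel_pushforward (S1 S2 : finType) (f : S1 -> S2) (mu : {ffun S1 -> rat}) :
  is_dist mu -> lift_rel (fun x y => f x = y) mu (pushforward f mu).
Proof.
move=> dist_mu; exists (fun x y => if f x == y then mu x else 0); split.
- by move=> x y; case: ifP => _; [exact: is_dist_bounds | rewrite lexx ler01].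
- move=> x; rewrite (bigD1 (f x)) //= eqxx big1 ?addr0 // => y /negbTE.
  by rewrite eq_sym => ->.
- by move=> y; rewrite ffunE [in RHS]big_mkcond.
- by move=> x y; case: eqP => // _; rewrite ltxx.
Qed.

Section Quotient.

Variables (A : eqType) (I : finType) (P : I -> lpts A) (i0 : I).
Variables (Pi : {set {set union_st P}}) (hPi : partition Pi [set: union_st P]).

Lemma class_ofE (x : union_st P) (e : class_t Pi) :
  (class_of hPi x == e) = (x \in val e).
Proof.
rewrite -val_eqE /=; apply/eqP/idP => [<- | x_e].
  by rewrite mem_pblock; case/andP: hPi => /eqP ->; rewrite inE.
by apply: def_pblock (valP e) x_e; case/and3P: hPi.
Qed.

Lemma quotient_trans (i : I) s a mu :
  (s, a, mu) \in trans (P i) ->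
  (class_of hPi (inj_st s), a, pushforward (fun s' => class_of hPi (inj_st s')) mu)
    \in trans (quotient hPi i0).
Proof.
move=> s_mu; apply/flatten_mapP; exists i; first by rewrite mem_enum.
apply/mapP; exists (s, a, mu) => //; congr (_, _, _); apply/ffunP => e.
by rewrite !ffunE; apply: eq_bigl => s'; rewrite class_ofE.
Qed.

Lemma strong_sim_class_of (i : I) :
  wf_lpts (P i) ->
  strong_sim (fun (s : st (P i)) (e : st (quotient hPi i0)) =>
                class_of hPi (inj_st s) = e).
Proof.
move=> wfP s _ a mu <- s_mu.
exists (pushforward (fun s' => class_of hPi (inj_st s')) mu); split.
  exact: quotient_trans.
exact/lift_rel_pushforward/(wf_trans_is_dist wfP s_mu).
Qed.

End Quotient.

Theorem lemma6 (A : eqType) (I : finType) (P : I -> lpts A) (i0 : I)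
  (Pi : {set {set union_st P}}) (hPi : partition Pi [set: union_st P]) :
  (forall i, stoch_tree (P i)) ->
  (forall i j, pblock Pi (inj_st (start (P i))) = pblock Pi (inj_st (start (P j)))) ->
  forall i, simulated (P i) (quotient hPi i0).
Proof.
move=> tree_P same_start i.
have wfP : wf_lpts (P i) by case/andP: (tree_P i) => /andP[].
exists (fun s e => class_of hPi (inj_st s) = e); split.
  exact: strong_sim_class_of.
by apply: val_inj; rewrite /= (same_start i i0).
Qed.
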